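(* Let $X=\{a_1,\dots,a_\ell\}$ be a finite set of $\ell$ distinct points and $N\ge 2$. A probability measure $\mu$ on $X^2$ is an extreme point of the convex set $\mathcal{P}_{N\text{-}rep}(X^2)$ of $N$-representable two-point probability measures if and only if it is of the form $$\mu=\lambda\otimes\lambda+\frac1{N-1}\Big(\lambda\otimes\lambda-\sum_{i=1}^\ell\lambda_i\,\delta_i\otimes\delta_i\Big)$$ for some $\lambda\in\mathcal{P}_{\frac1N}(X)$.
   Context: $\mathcal{P}(X)$ denotes the probability measures on $X$, identified with vectors $(\lambda_1,\dots,\lambda_\ell)$ where $\lambda_i=\lambda(\{a_i\})$; $\delta_i$ is the Dirac measure at $a_i$. $\mathcal{P}_{\frac1N}(X)=\{\lambda\in\mathcal{P}(X):\lambda_i\in\frac1N\mathbb{Z}\ \forall i\}$. A probability measure $\gamma$ on $X^N$ is symmetric if $\gamma(A_1\times\cdots\times A_N)=\gamma(A_{\sigma(1)}\times\cdots\times A_{\sigma(N)})$ for all $A_i\subseteq X$ and permutations $\sigma$. A probability measure $\mu$ on $X^2$ is $N$-representable if there is a symmetric probability measure $\gamma$ on $X^N$ with two-point marginal $\gamma(A\times X^{N-2})=\mu(A)$ for all $A\subseteq X^2$; $\mathcal{P}_{N\text{-}rep}(X^2)$ denotes the set of such $\mu$. *)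

From HB Require Import structures.
From mathcomp Require Import all_boot all_order all_algebra.
From mathcomp Require Import fingroup perm.
From mathcomp Require Import reals.
Set Implicit Arguments. Unset Strict Implicit. Unset Printing Implicit Defensive.
Import Order.TTheory GRing.Theory Num.Theory.
Local Open Scope ring_scope.

Section Defs.
Variable R : realType.

Definition is_prob (U : finType) (m : U -> R) : Prop :=
  (forall u, 0 <= m u) /\ \sum_(u : U) m u = 1.

Definition massof (U : finType) (m : U -> R) (A : {set U}) : R :=
  \sum_(u in A) m u.

Definition rect (T : finType) (N : nat) (A : 'I_N -> {set T})
  : {set {ffun 'I_N -> T}} :=
  [set x : {ffun 'I_N -> T} | [forall i, x i \in A i]].

Definition symmetric (T : finType) (N : nat) (g : {ffun 'I_N -> T} -> R) : Prop :=
  forall (A : 'I_N -> {set T}) (s : {perm 'I_N}),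
    massof g (rect A) = massof g (rect (fun i => A (s i))).

(* A x X^{N-2}, i.e. the set of x whose first two coordinates lie in A *)
Definition cyl2 (T : finType) (N : nat) (A : {set T * T})
  : {set {ffun 'I_N -> T}} :=
  [set x : {ffun 'I_N -> T} | [exists i0 : 'I_N, exists i1 : 'I_N,
     [&& val i0 == 0%N, val i1 == 1%N & (x i0, x i1) \in A]]].

Definition N_representable (T : finType) (N : nat) (mu : T * T -> R) : Prop :=
  exists g : {ffun 'I_N -> T} -> R,
    is_prob g /\ symmetric g /\
    forall A : {set T * T}, massof g (@cyl2 T N A) = massof mu A.

Definition prob_grid (T : finType) (N : nat) (lam : T -> R) : Prop :=
  is_prob lam /\ forall a, exists k : int, lam a = k%:~R / N%:R.

Definition extreme_point (U : finType) (S : (U -> R) -> Prop) (mu : U -> R) : Prop :=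
  S mu /\
  forall (nu1 nu2 : U -> R) (t : R), S nu1 -> S nu2 -> 0 < t < 1 ->
    (forall u, mu u = t * nu1 u + (1 - t) * nu2 u) -> forall u, nu1 u = nu2 u.

End Defs.

(* A symmetric law on X^N is a mixture of uniform laws on the rearrangements
   of configurations x, and the two-point marginal of such a uniform law is
   pair_law (empirical x), i.e. the measure of the theorem for the empirical
   measure of x.  So the N-representable measures form the convex hull of the
   pair_law lam with lam in P_{1/N}(X), and every extreme point is one of them.
   Conversely, for lam0 in P_{1/N}(X) the affine functional excess lam0 equals
   |lam - lam0|^2 at pair_law lam; it is thus nonnegative on representable
   measures and vanishes only at pair_law lam0, which forces both halves of
   any convex splitting of pair_law lam0 to be pair_law lam0 itself. *)

From Pilot Require Import Defs.
From mathcomp Require Import all_boot all_order all_algebra.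
From mathcomp Require Import fingroup perm.
From mathcomp Require Import reals.
From mathcomp Require Import ring lra.
Import Order.TTheory GRing.Theory Num.Theory.
Set Implicit Arguments. Unset Strict Implicit. Unset Printing Implicit Defensive.
Local Open Scope ring_scope.

Section Exchangeable.
Variables (R : realType) (T : finType) (N : nat).
Local Notation config := {ffun 'I_N -> T}.
Implicit Types (x y : config) (g : config -> R)
  (s : {perm 'I_N}) (lam : T -> R) (p : T * T) (nu : T * T -> R).

Lemma sum_delta (I : finType) (i : I) (F : I -> R) : \sum_j (i == j)%:R * F j = F i.
Proof.
rewrite (bigD1 i) //= eqxx mul1r big1 ?addr0 // => j.
by rewrite eq_sym => /negbTE ->; rewrite mul0r.
Qed.

Definition reorder s x : config := [ffun i => x (s i)].

Definition perm_invariant g := forall s x, g (reorder s x) = g x.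

Lemma reorder_inj s : injective (reorder s).
Proof.
by move=> x y /ffunP xy; apply/ffunP => i; have := xy (s^-1 i)%g; rewrite !ffunE permKV.
Qed.

Lemma rect1 (f : 'I_N -> T) : rect (fun i => [set f i]) = [set [ffun i => f i]].
Proof.
apply/setP => x; rewrite !inE; apply/forallP/eqP => [x_f | -> i].
  by apply/ffunP => i; have := x_f i; rewrite inE ffunE => /eqP.
by rewrite inE ffunE.
Qed.

Lemma symmetricP g : Defs.symmetric g <-> perm_invariant g.
Proof.
split=> [g_sym s x | g_inv A s].
  have := g_sym (fun i => [set x i]) s.
  by rewrite !rect1 /massof !big_set1 ffunK => ->.
rewrite /massof (reindex_inj (@reorder_inj s^-1%g)); apply: eq_big => [x | x _].
  rewrite !inE; apply/forallP/forallP => x_A i.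
    by have := x_A (s i); rewrite ffunE permK.
  by rewrite ffunE; have := x_A (s^-1 i)%g; rewrite permKV.
by rewrite g_inv.
Qed.

Definition counts x : {ffun T -> nat} := [ffun a => (\sum_(i < N) (x i == a))%N].

Definition empirical x a : R := (counts x a)%:R / N%:R.

Lemma counts_natr x a : (counts x a)%:R = \sum_i (x i == a)%:R :> R.
Proof. by rewrite ffunE natr_sum. Qed.

Lemma counts_reorder s x : counts (reorder s x) = counts x.
Proof.
apply/ffunP => a; rewrite !ffunE [RHS](reindex_inj (@perm_inj _ s)).
by apply: eq_bigr => i _; rewrite ffunE.
Qed.

Lemma sum_counts x : (\sum_a counts x a)%N = N.
Proof.
under eq_bigr do rewrite ffunE.
rewrite exchange_big -[RHS]card_ord -sum1_card; apply: eq_bigr => i _.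
by rewrite (bigD1 (x i)) //= eqxx big1 // => a; rewrite eq_sym => /negbTE ->.
Qed.

(* For lam = empirical x, the proportion of ordered pairs of distinct
   positions of x carrying p (see pair_law_empirical). *)
Definition pair_law lam p : R :=
  lam p.1 * lam p.2 + (N%:R - 1)^-1 * (lam p.1 * lam p.2 - (p.1 == p.2)%:R * lam p.1).

Definition mixture g p : R := \sum_x g x * pair_law (empirical x) p.

Definition marginal2 g (i j : 'I_N) p : R := \sum_(x : config | (x i, x j) == p) g x.

Lemma marginal2E g i j p : marginal2 g i j p = \sum_x g x * ((x i, x j) == p)%:R.
Proof.
by rewrite /marginal2 big_mkcond; apply: eq_bigr => x _; rewrite mulr_natr mulrb.
Qed.

Lemma marginal2_reorder g s i j p :
  perm_invariant g -> marginal2 g (s i) (s j) p = marginal2 g i j p.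
Proof.
move=> g_inv; rewrite /marginal2 [RHS](reindex_inj (@reorder_inj s)).
by apply: eq_big => [x | x _]; rewrite ?g_inv // !ffunE.
Qed.

Lemma marginal2_distinct g i j i' j' p : perm_invariant g ->
  i != j -> i' != j' -> marginal2 g i j p = marginal2 g i' j' p.
Proof.
move=> g_inv ij i'j'; pose k := tperm i i' j.
have k_i' : k != i' by rewrite -(tpermL i i') (inj_eq perm_inj) eq_sym.
rewrite -(marginal2_reorder (tperm i i' * tperm k j')%g) // !permM tpermL -/k tpermL.
by rewrite tpermD // eq_sym.
Qed.

Lemma count_distinct_pairs x a b :
  \sum_i \sum_(j | j != i) ((x i, x j) == (a, b))%:R
  = (counts x a)%:R * (counts x b)%:R - (a == b)%:R * (counts x a)%:R :> R.
Proof.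
have row i : \sum_j ((x i, x j) == (a, b))%:R = (x i == a)%:R * (counts x b)%:R :> R.
  by rewrite counts_natr mulr_sumr; apply: eq_bigr => j _; rewrite xpair_eqE -mulnb natrM.
have diag i : ((x i, x i) == (a, b))%:R = (a == b)%:R * (x i == a)%:R :> R.
  rewrite xpair_eqE -natrM mulnb.
  by case: (eqVneq (x i) a) => [-> | _]; rewrite ?eqxx ?andbT ?andbF.
transitivity (\sum_i ((x i == a)%:R * (counts x b)%:R - (a == b)%:R * (x i == a)%:R) : R).
  by apply: eq_bigr => i _; rewrite -row -diag [in RHS](bigD1 i) //=; ring.
by rewrite sumrB -mulr_suml -mulr_sumr -counts_natr.
Qed.

Hypothesis N_gt1 : (1 < N)%N.

Lemma N_neq0 : N%:R != 0 :> R.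
Proof. by rewrite pnatr_eq0 -lt0n ltnW. Qed.

Lemma N_sub1_neq0 : N%:R - 1 != 0 :> R.
Proof. by rewrite subr_eq0 pnatr_eq1 neq_ltn N_gt1 orbT. Qed.

Lemma sum_distinct_pairs_const (c : R) :
  \sum_(i < N) \sum_(j | j != i) c = N%:R * (N%:R - 1) * c.
Proof.
have row (i : 'I_N) : \sum_(j | j != i) c = (N%:R - 1) * c.
  transitivity (\sum_(j in predC1 i) c); first by [].
  by rewrite sumr_const cardC1 card_ord -[LHS]mulr_natl -subn1 natrB // ltnW.
under eq_bigr do rewrite row.
by rewrite sumr_const card_ord -[LHS]mulr_natl mulrA.
Qed.

Lemma pair_law_empirical x a b :
  N%:R * (N%:R - 1) * pair_law (empirical x) (a, b)
  = \sum_i \sum_(j | j != i) ((x i, x j) == (a, b))%:R.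
Proof.
rewrite count_distinct_pairs /pair_law /empirical /=.
by field; rewrite N_neq0 N_sub1_neq0.
Qed.

Lemma marginal2_mixture g i j p :
  perm_invariant g -> i != j -> marginal2 g i j p = mixture g p.
Proof.
move=> g_inv ij; case: p => a b.
apply: (mulfI (mulf_neq0 N_neq0 N_sub1_neq0)).
rewrite -sum_distinct_pairs_const.
under eq_bigr => i' _ do under eq_bigr => j' j'i' do
  rewrite (marginal2_distinct _ g_inv ij (i' := i') (j' := j')) 1?eq_sym // marginal2E.
rewrite /mixture mulr_sumr.
under [RHS]eq_bigr do rewrite mulrCA pair_law_empirical mulr_sumr.
under eq_bigr do rewrite exchange_big /=.
rewrite exchange_big; apply: eq_bigr => x _; apply: eq_bigr => i' _.
by rewrite mulr_sumr.
Qed.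

Lemma in_cyl2 A x :
  (x \in cyl2 N A) = ((x (Ordinal (ltnW N_gt1)), x (Ordinal N_gt1)) \in A).
Proof.
rewrite inE; apply/existsP/idP => [[i /existsP [j /and3P [/eqP i0 /eqP j1 x_A]]] | x_A].
  have -> : Ordinal (ltnW N_gt1) = i by apply: val_inj.
  by have -> : Ordinal N_gt1 = j by apply: val_inj.
by exists (Ordinal (ltnW N_gt1)); apply/existsP; exists (Ordinal N_gt1); rewrite x_A.
Qed.

Lemma cyl2_mass g A :
  perm_invariant g -> massof g (cyl2 N A) = massof (mixture g) A.
Proof.
move=> g_inv; pose i0 := Ordinal (ltnW N_gt1); pose i1 := Ordinal N_gt1.
rewrite /massof (partition_big (fun x => (x i0, x i1)) (mem A)) => [|x]; last first.
  by rewrite in_cyl2.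
apply: eq_bigr => p p_A; rewrite -(marginal2_mixture _ g_inv (_ : i0 != i1)) //.
by apply: eq_bigl => x; rewrite in_cyl2 andb_idl // => /eqP ->.
Qed.

Lemma N_representableP nu : N_representable N nu <->
  exists g, [/\ is_prob g, perm_invariant g & nu =1 mixture g].
Proof.
split=> [[g [g_prob [/symmetricP g_inv g_marg]]] | [g [g_prob g_inv nu_g]]].
  exists g; split=> // p; have := g_marg [set p].
  by rewrite cyl2_mass // /massof !big_set1.
exists g; split=> //; split; first exact/symmetricP.
by move=> A; rewrite cyl2_mass //; apply: eq_bigr => p _; rewrite nu_g.
Qed.

Lemma eq_N_representable nu nu' :
  nu =1 nu' -> N_representable N nu -> N_representable N nu'.
Proof.
move=> nu_nu' /N_representableP [g [g_prob g_inv nu_g]].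
by apply/N_representableP; exists g; split=> // p; rewrite -nu_nu'.
Qed.

Lemma sum_empirical x : \sum_a empirical x a = 1.
Proof. by rewrite -mulr_suml -natr_sum sum_counts divff ?N_neq0. Qed.

Lemma empirical_prob_grid x : prob_grid N (empirical x).
Proof.
split; last by move=> a; exists (counts x a)%:Z.
by split=> [a |]; rewrite ?sum_empirical ?divr_ge0.
Qed.

Lemma exists_counts (n : T -> nat) :
  (\sum_a n a)%N = N -> exists x, forall a, counts x a = n a.
Proof.
move=> n_sum; pose s := flatten [seq nseq (n a) a | a <- enum T].
have s_size : size s = N.
  rewrite size_flatten /shape -map_comp sumnE big_map big_enum -n_sum.
  by apply: eq_bigr => a _; rewrite /= size_nseq.
have s_count a : count_mem a s = n a.
  rewrite count_flatten -map_comp sumnE big_map big_enum /= (bigD1 a) //=.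
  rewrite count_nseq /= eqxx mul1n big1 ?addn0 // => b ba.
  by rewrite count_nseq /= (negbTE ba).
have s_gt0 : (0 < size s)%N by rewrite s_size ltnW.
case: s s_size s_count s_gt0 => // a0 s' s_size s_count _.
exists [ffun i : 'I_N => nth a0 (a0 :: s') i] => a.
rewrite ffunE -s_count -sum1_count (big_nth a0) big_mkord -s_size [RHS]big_mkcond /=.
by apply: eq_bigr => i _; rewrite ffunE; case: (_ == a).
Qed.

Lemma prob_grid_empirical lam : prob_grid N lam -> exists x, empirical x =1 lam.
Proof.
case=> -[lam_ge0 lam_sum1] lam_grid.
have /fin_all_exists [n lam_n] : forall a, exists n : nat, lam a = n%:R / N%:R.
  move=> a; have [k lam_k] := lam_grid a.
  have k_ge0 : 0 <= k.
    by have := lam_ge0 a; rewrite lam_k pmulr_lge0 ?invr_gt0 ?ltr0n ?ler0z // ltnW.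
  by exists `|k|%N; rewrite lam_k -{1}(gez0_abs k_ge0).
have n_sum : (\sum_a n a)%N = N.
  apply/eqP; rewrite -(eqr_nat R) natr_sum; apply/eqP.
  apply: (mulIf (invr_neq0 N_neq0)); rewrite divff ?N_neq0 // mulr_suml -[RHS]lam_sum1.
  by apply: eq_bigr => a _; rewrite lam_n.
have [x x_n] := exists_counts n_sum.
by exists x => a; rewrite /empirical x_n lam_n.
Qed.

Lemma mixture_supported g lam p : (forall x, g x != 0 -> empirical x =1 lam) ->
  mixture g p = (\sum_x g x) * pair_law lam p.
Proof.
move=> g_supp; rewrite /mixture mulr_suml; apply: eq_bigr => x _.
have [-> | /g_supp x_lam] := eqVneq (g x) 0; first by rewrite !mul0r.
by rewrite /pair_law !x_lam.
Qed.

(* The zero function when P has g-mass 0. *)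
Definition conditional g (P : pred config) x : R :=
  if P x then g x / \sum_(y | P y) g y else 0.

Lemma sum_conditional g P : \sum_(y | P y) g y != 0 -> \sum_x conditional g P x = 1.
Proof. by move=> P_neq0; rewrite -big_mkcond /= -mulr_suml divff. Qed.

Lemma mixture_conditional g P p : (forall x, 0 <= g x) ->
  (\sum_(y | P y) g y) * mixture (conditional g P) p
  = \sum_(x | P x) g x * pair_law (empirical x) p.
Proof.
move=> g_ge0; have [P_0 | P_neq0] := eqVneq (\sum_(y | P y) g y) 0.
  rewrite P_0 mul0r big1 // => x Px.
  by rewrite (psumr_eq0P (fun y _ => g_ge0 y) P_0) ?mul0r.
rewrite /mixture mulr_sumr [RHS]big_mkcond; apply: eq_bigr => x _.
rewrite /conditional; case: (P x); last by rewrite !mul0r mulr0.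
by rewrite mulrA mulrCA divff // mulr1.
Qed.

Lemma sum_predC g P : \sum_(y | predC P y) g y = \sum_x g x - \sum_(y | P y) g y.
Proof. by rewrite [X in _ = X - _](bigID P) /= addrAC subrr add0r. Qed.

Lemma mixture_split g P p : (forall x, 0 <= g x) -> \sum_x g x = 1 ->
  mixture g p = (\sum_(y | P y) g y) * mixture (conditional g P) p
                + (1 - \sum_(y | P y) g y) * mixture (conditional g (predC P)) p.
Proof.
move=> g_ge0 g_sum1.
by rewrite -g_sum1 -sum_predC !mixture_conditional // {1}/mixture (bigID P).
Qed.

Lemma representable_conditional g P :
  (forall x, 0 <= g x) -> perm_invariant g -> (forall s x, P (reorder s x) = P x) ->
  0 < \sum_(y | P y) g y -> N_representable N (mixture (conditional g P)).
Proof.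
move=> g_ge0 g_inv P_inv P_gt0; apply/N_representableP.
exists (conditional g P); split=> //.
  split; last by rewrite sum_conditional ?gt_eqF.
  by move=> x; rewrite /conditional; case: ifP => // _; rewrite divr_ge0 // ltW.
by move=> s x; rewrite /conditional g_inv P_inv.
Qed.

Definition same_counts x : pred config := [pred y | counts y == counts x].

Lemma same_counts_reorder x s y : same_counts x (reorder s y) = same_counts x y.
Proof. by rewrite /same_counts /= counts_reorder. Qed.

Lemma same_counts_mass_gt0 g x :
  (forall y, 0 <= g y) -> 0 < g x -> 0 < \sum_(y | same_counts x y) g y.
Proof.
move=> g_ge0 gx; have Cx : same_counts x x by rewrite /same_counts /=.
by rewrite (bigD1 x) //=; apply: ltr_pwDl; rewrite // sumr_ge0.
Qed.

Lemma mixture_same_counts g x : \sum_(y | same_counts x y) g y != 0 ->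
  mixture (conditional g (same_counts x)) =1 pair_law (empirical x).
Proof.
move=> C_neq0 p.
rewrite (mixture_supported (lam := empirical x)) ?sum_conditional ?mul1r // => y.
by rewrite /conditional; case: ifP => [/eqP y_x _ a | _]; rewrite ?eqxx // /empirical y_x.
Qed.

Lemma representable_pair_law x : N_representable N (pair_law (empirical x)).
Proof.
have C_gt0 := @same_counts_mass_gt0 (fun=> 1) x (fun=> ler01) ltr01.
have := representable_conditional (fun=> ler01) (fun _ _ => erefl)
  (same_counts_reorder x) C_gt0.
by apply: eq_N_representable; apply: mixture_same_counts; rewrite gt_eqF.
Qed.

Lemma extreme_point_convex (U : finType) (S : (U -> R) -> Prop)
    (mu nu1 nu2 : U -> R) t :
  extreme_point S mu -> S nu1 -> S nu2 -> 0 < t < 1 ->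
  (forall u, mu u = t * nu1 u + (1 - t) * nu2 u) -> mu =1 nu1.
Proof.
move=> [_ mu_ext] S1 S2 t01 mu_t u.
by rewrite mu_t (mu_ext _ _ _ S1 S2 t01 mu_t u); ring.
Qed.

Lemma extreme_point_empirical mu :
  extreme_point (N_representable N) mu -> exists x, mu =1 pair_law (empirical x).
Proof.
move=> mu_ext; have [/N_representableP [g [[g_ge0 g_sum1] g_inv mu_g]] _] := mu_ext.
have [x /andP [_ gx_gt0]] : exists x, true && (0 < g x).
  by apply: psumr_neq0P => //; rewrite g_sum1 => /eqP; rewrite oner_eq0.
exists x; set C := same_counts x; set t := \sum_(y | C y) g y.
have t_gt0 : 0 < t := same_counts_mass_gt0 g_ge0 gx_gt0.
have t_le1 : t <= 1 by rewrite -subr_ge0 -g_sum1 -sum_predC sumr_ge0.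
have mu_split p : mu p = t * mixture (conditional g C) p
                         + (1 - t) * mixture (conditional g (predC C)) p.
  by rewrite mu_g (mixture_split C).
move=> p; rewrite -(mixture_same_counts (lt0r_neq0 t_gt0)).
have [t_lt1 | t_ge1] := ltP t 1.
  apply: (extreme_point_convex mu_ext _ _ _ mu_split); last by rewrite t_gt0.
    exact: representable_conditional (same_counts_reorder x) t_gt0.
  apply: representable_conditional => // [s y | ].
    by rewrite /= /C same_counts_reorder.
  by rewrite sum_predC g_sum1 subr_gt0.
have t1 : t = 1 by apply/le_anti; rewrite t_le1.
by rewrite mu_split t1 subrr mul0r addr0 mul1r.
Qed.

Definition sqdist (lam lam' : T -> R) : R := \sum_a (lam a - lam' a) ^+ 2.

(* Weights chosen so that excess lam0 (pair_law lam) = sqdist lam lam0 whenever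
   lam has total mass 1 (excess_pair_law). *)
Definition excess (lam0 : T -> R) nu : R :=
  \sum_a \sum_b ((a == b)%:R * ((N%:R - 1) / N%:R) - 2 * lam0 a) * nu (a, b)
  + (\sum_a lam0 a ^+ 2 + N%:R^-1).

Lemma eq_excess lam0 nu nu' : nu =1 nu' -> excess lam0 nu = excess lam0 nu'.
Proof.
by move=> nu_nu'; rewrite /excess; under eq_bigr do under eq_bigr do rewrite nu_nu'.
Qed.

Lemma excess_convex lam0 nu1 nu2 t :
  excess lam0 (fun p => t * nu1 p + (1 - t) * nu2 p)
  = t * excess lam0 nu1 + (1 - t) * excess lam0 nu2.
Proof.
rewrite /excess; move: (\sum_a lam0 a ^+ 2 + N%:R^-1) => c.
rewrite !mulrDr addrACA -mulrDl subrKC mul1r; congr (_ + _).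
rewrite !mulr_sumr -big_split; apply: eq_bigr => a _.
by rewrite !mulr_sumr -big_split; apply: eq_bigr => b _ /=; ring.
Qed.

Lemma sum_pair_law lam a : \sum_b lam b = 1 -> \sum_b pair_law lam (a, b) = lam a.
Proof.
move=> lam_sum1.
rewrite /pair_law /= big_split /= -!mulr_sumr sumrB -mulr_sumr lam_sum1.
by rewrite (sum_delta a (fun=> lam a)); ring.
Qed.

Lemma excess_pair_law lam0 lam :
  \sum_a lam a = 1 -> excess lam0 (pair_law lam) = sqdist lam lam0.
Proof.
move=> lam_sum1.
have row a :
    \sum_b ((a == b)%:R * ((N%:R - 1) / N%:R) - 2 * lam0 a) * pair_law lam (a, b)
    = lam a ^+ 2 - lam a / N%:R - 2 * lam0 a * lam a.
  under eq_bigr do rewrite mulrBl -mulrA.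
  rewrite sumrB sum_delta -mulr_sumr sum_pair_law //.
  rewrite /pair_law /= eqxx (_ : true%:R = 1) //.
  by field; rewrite N_neq0 N_sub1_neq0.
have sq a : (lam a - lam0 a) ^+ 2
    = lam a ^+ 2 - lam a / N%:R - 2 * lam0 a * lam a + lam0 a ^+ 2 + lam a / N%:R.
  by ring.
rewrite /excess /sqdist (eq_bigr _ (fun a _ => row a)) (eq_bigr _ (fun a _ => sq a)).
by rewrite !big_split /= -mulr_suml lam_sum1 mul1r addrA.
Qed.

Lemma excess_mixture lam0 g : \sum_x g x = 1 ->
  excess lam0 (mixture g) = \sum_x g x * sqdist (empirical x) lam0.
Proof.
move=> g_sum1.
under [RHS]eq_bigr do rewrite -excess_pair_law ?sum_empirical // /excess mulrDr.
rewrite big_split /= -mulr_suml g_sum1 mul1r; congr (_ + _).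
rewrite /mixture; under eq_bigr => x _ do rewrite mulr_sumr.
rewrite [RHS]exchange_big; apply: eq_bigr => a _.
under eq_bigr => x _ do rewrite mulr_sumr.
rewrite [RHS]exchange_big; apply: eq_bigr => b _.
by rewrite mulr_sumr; apply: eq_bigr => x _; rewrite mulrCA.
Qed.

Lemma excess_representable_ge0 lam0 nu :
  N_representable N nu -> 0 <= excess lam0 nu.
Proof.
case/N_representableP=> g [[g_ge0 g_sum1] _ nu_g].
rewrite (eq_excess _ nu_g) excess_mixture // sumr_ge0 // => x _.
by rewrite mulr_ge0 // sumr_ge0 // => a _; rewrite sqr_ge0.
Qed.

Lemma excess_representable_eq0 lam0 nu :
  N_representable N nu -> excess lam0 nu = 0 -> nu =1 pair_law lam0.
Proof.
case/N_representableP=> g [[g_ge0 g_sum1] _ nu_g].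
rewrite (eq_excess _ nu_g) excess_mixture // => excess0 p.
rewrite nu_g (mixture_supported (lam := lam0)) ?g_sum1 ?mul1r // => x gx a.
have sqdist_ge0 y : 0 <= sqdist (empirical y) lam0.
  by rewrite sumr_ge0 // => b _; rewrite sqr_ge0.
have /eqP := psumr_eq0P (fun y _ => mulr_ge0 (g_ge0 y) (sqdist_ge0 y)) excess0 (i := x) isT.
rewrite mulf_eq0 (negbTE gx) /= => /eqP /psumr_eq0P sqdist0.
by apply/eqP; rewrite -subr_eq0 -sqrf_eq0 sqdist0 // => b _; rewrite sqr_ge0.
Qed.

Lemma extreme_point_pair_law lam mu :
  prob_grid N lam -> mu =1 pair_law lam -> extreme_point (N_representable N) mu.
Proof.
move=> lam_grid mu_lam; have [x x_lam] := prob_grid_empirical lam_grid.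
have lam_sum1 : \sum_a lam a = 1 by case: lam_grid => -[].
split.
  apply: eq_N_representable (representable_pair_law x) => p.
  by rewrite mu_lam /pair_law !x_lam.
move=> nu1 nu2 t rep1 rep2 /andP [t_gt0 t_lt1] mu_nu.
have excess1 := excess_representable_ge0 lam rep1.
have excess2 := excess_representable_ge0 lam rep2.
have : t * excess lam nu1 + (1 - t) * excess lam nu2 = 0.
  rewrite -excess_convex -(eq_excess _ mu_nu) (eq_excess _ mu_lam) excess_pair_law //.
  by rewrite /sqdist big1 // => a _; rewrite subrr expr0n.
move=> excess0.
have [zero1 zero2] : excess lam nu1 = 0 /\ excess lam nu2 = 0 by split; nra.
move=> p.
by rewrite (excess_representable_eq0 rep1 zero1) (excess_representable_eq0 rep2 zero2).
Qed.

End Exchangeable.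

Theorem theorem2p2 (R : realType) (T : finType) (N : nat) (hN : (2 <= N)%N)
  (mu : T * T -> R) (hmu : is_prob mu) :
  extreme_point (@N_representable R T N) mu <->
  exists lam : T -> R, prob_grid N lam /\
    forall a b : T,
      mu (a, b) = lam a * lam b
                  + (N%:R - 1)^-1 * (lam a * lam b - (a == b)%:R * lam a).
Proof.
(* hmu is redundant: either side already makes mu a probability measure. *)
split=> [/(extreme_point_empirical hN) [x mu_x] | [lam [lam_grid mu_lam]]].
  exists (empirical R x); split; first exact: empirical_prob_grid.
  by move=> a b; rewrite mu_x.
by apply: (extreme_point_pair_law hN lam_grid) => -[a b]; rewrite mu_lam.
Qed.
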